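(* Let $\Pi$ be a finite projective plane of order $n\ge 2$ with point set $P$ and line set $L$. Let $G(\Pi)$ be the graph with vertex set $P\cup L$ in which $P$ is a clique, $L$ is a stable set, and a point $p\in P$ is adjacent to a line $\ell\in L$ iff $p$ is incident with $\ell$ in $\Pi$. Then $G(\Pi)$ is $\cap$-edge simplicial but not CIS.
   Context: A clique $C$ is simplicial if $C=N[v]$ for some vertex $v$; a graph is edge simplicial if every edge lies in a simplicial clique; it is $\cap$-edge simplicial if both it and its complement are edge simplicial. A graph is CIS if every maximal clique and every maximal stable set intersect. *)

From mathcomp Require Import all_boot.
Set Implicit Arguments. Unset Strict Implicit. Unset Printing Implicit Defensive.

Definition projective_plane (P L : finType) (inc : P -> L -> bool) : Prop :=
  [/\ forall p q : P, p != q -> exists! l : L, inc p l && inc q l,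
      forall l m : L, l != m -> exists! p : P, inc p l && inc p m &
      exists a b c d : P,
        uniq [:: a; b; c; d] /\
        forall l : L,
          ~~ [&& inc a l, inc b l & inc c l] /\
          ~~ [&& inc a l, inc b l & inc d l] /\
          ~~ [&& inc a l, inc c l & inc d l] /\
          ~~ [&& inc b l, inc c l & inc d l]].

Definition projective_plane_of_order (P L : finType) (inc : P -> L -> bool)
    (n : nat) : Prop :=
  projective_plane inc /\ forall l : L, #|[set p | inc p l]| = n.+1.

Section Graphs.
Variable T : finType.
Variable e : rel T.

Definition is_clique (C : {set T}) : Prop :=
  forall x y, x \in C -> y \in C -> x != y -> e x y.

Definition is_stable (S : {set T}) : Prop :=
  forall x y, x \in S -> y \in S -> x != y -> ~~ e x y.

Definition maximal_clique (C : {set T}) : Prop :=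
  is_clique C /\ forall D : {set T}, is_clique D -> C \subset D -> D = C.

Definition maximal_stable (S : {set T}) : Prop :=
  is_stable S /\ forall D : {set T}, is_stable D -> S \subset D -> D = S.

Definition closed_nbhd (v : T) : {set T} := [set u | (u == v) || e v u].

Definition simplicial_clique (C : {set T}) : Prop :=
  is_clique C /\ exists v, C = closed_nbhd v.

Definition edge_simplicial : Prop :=
  forall x y, e x y -> exists C, simplicial_clique C /\ x \in C /\ y \in C.

Definition CIS : Prop :=
  forall C S, maximal_clique C -> maximal_stable S -> exists x, x \in C :&: S.

End Graphs.

Definition complement_graph (T : finType) (e : rel T) : rel T :=
  fun x y => (x != y) && ~~ e x y.

Definition cap_edge_simplicial (T : finType) (e : rel T) : Prop :=
  edge_simplicial e /\ edge_simplicial (complement_graph e).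

Definition G_Pi (P L : finType) (inc : P -> L -> bool) : rel (P + L)%type :=
  fun x y =>
    match x, y with
    | inl p, inl q => p != q
    | inr _, inr _ => false
    | inl p, inr l => inc p l
    | inr l, inl p => inc p l
    end.

(* In G(Pi) the closed neighbourhood of a line l is the clique formed by l and
   its points, and in the complement the closed neighbourhood of a point p is
   the clique formed by p and the lines missing p.  An edge p q of G(Pi) lies in
   N[l] for the line l = pq, and an edge l m of the complement lies in the
   complementary N[p] for any point p on neither l nor m; such a point exists
   because lines have at least three points.  The point set P is a maximal
   clique and the line set L a maximal stable set (every line misses a point,
   every point is on a line), and they are disjoint, so G(Pi) is not CIS. *)
From mathcomp Require Import all_boot.
Set Implicit Arguments. Unset Strict Implicit. Unset Printing Implicit Defensive.

Section ProjectivePlane.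
Variables (P L : finType) (inc : P -> L -> bool).
Hypothesis plane : projective_plane inc.

Lemma line_through_uniq p q l m :
  p != q -> inc p l -> inc q l -> inc p m -> inc q m -> l = m.
Proof.
case: plane => join _ _ pq pl ql pm qm.
have [k [_ k_uniq]] := join p q pq.
by rewrite -(k_uniq l) ?pl ?ql // (k_uniq m) ?pm ?qm.
Qed.

Lemma meet_point_uniq p q l m :
  l != m -> inc p l -> inc p m -> inc q l -> inc q m -> p = q.
Proof.
case: plane => _ meet _ lm pl pm ql qm.
have [k [_ k_uniq]] := meet l m lm.
by rewrite -(k_uniq p) ?pl ?pm // (k_uniq q) ?ql ?qm.
Qed.

Lemma exists_line_through p q : exists l, inc p l && inc q l.
Proof.
case: plane => join _ [a [b [c [d [abcd _]]]]].
have [r pr] : exists r, p != r.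
  have ab : a != b by move: abcd; rewrite /= !inE negb_or => /andP [/andP []].
  by case: (eqVneq p a) => [->|pa]; [exists b | exists a].
case: (eqVneq p q) => [<-|pq]; last by have [l []] := join p q pq; exists l.
by have [l [/andP [pl _] _]] := join p r pr; exists l; rewrite pl.
Qed.

Lemma exists_point_off l : exists p, ~~ inc p l.
Proof.
case: plane => _ _ [a [b [c [d [_ noncollinear]]]]].
have [not_abc _] := noncollinear l.
case al: (inc a l); last by exists a; rewrite al.
case bl: (inc b l); last by exists b; rewrite bl.
by exists c; move: not_abc; rewrite al bl.
Qed.

Variable n : nat.
Hypothesis order_ge2 : 2 <= n.
Hypothesis line_card : forall l : L, #|[set p | inc p l]| = n.+1.

Lemma exists_third_point l u v : exists w, [&& inc w l, w != u & w != v].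
Proof.
apply/existsP; apply: contraLR order_ge2 => /existsPn no_third.
have : [set p | inc p l] \subset [set u; v].
  apply/subsetP => w; rewrite !inE => wl.
  by move: (no_third w); rewrite wl /= -negb_or negbK.
move/subset_leq_card; rewrite line_card cards2 ltnS -leqNgt => /leq_trans; apply.
exact: leq_b1.
Qed.

(* With x the meet of l and m, take a on l and b on m, both different from x;
   a third point of the line ab is on neither l nor m. *)
Lemma exists_point_off2 l m : l != m -> exists p, ~~ inc p l && ~~ inc p m.
Proof.
move=> lm; case: plane => _ meet _.
have [x [/andP [xl xm] _]] := meet l m lm.
have [a /and3P [al ax _]] := exists_third_point l x x.
have [b /and3P [bm bx _]] := exists_third_point m x x.
have am : ~~ inc a m by apply: contra ax => am; rewrite (meet_point_uniq lm al am xl xm).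
have bl : ~~ inc b l by apply: contra bx => bl; rewrite (meet_point_uniq lm bl bm xl xm).
have [k /andP [ak bk]] := exists_line_through a b.
have [c /and3P [ck ca cb]] := exists_third_point k a b.
exists c; apply/andP; split.
- by apply: contra bl => cl; rewrite -(line_through_uniq ca ck ak cl al).
- by apply: contra am => cm; rewrite -(line_through_uniq cb ck bk cm bm).
Qed.

End ProjectivePlane.

Section IncidenceGraph.
Variables (P L : finType) (inc : P -> L -> bool).

Local Notation G := (G_Pi inc).
Local Notation coG := (complement_graph (G_Pi inc)).

Definition point_set : {set P + L} := [set x | if x is inl _ then true else false].
Definition line_set : {set P + L} := [set x | if x is inr _ then true else false].

Lemma simplicial_closed_nbhd (T : finType) (e : rel T) v :
  is_clique e (closed_nbhd e v) -> simplicial_clique e (closed_nbhd e v).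
Proof. by split; last exists v. Qed.

Lemma clique_closed_nbhd_line l : is_clique G (closed_nbhd G (inr l)).
Proof.
move=> [p|k] [q|k']; rewrite !inE //= ?orbF.
- by move=> pl /eqP [->].
- by move=> /eqP [->].
- by move=> /eqP [->] /eqP [->]; rewrite eqxx.
Qed.

Lemma clique_closed_nbhd_point_compl p : is_clique coG (closed_nbhd coG (inl p)).
Proof.
have off_p x : x \in closed_nbhd coG (inl p) -> x = inl p \/ exists2 l, x = inr l & ~~ inc p l.
  by case: x => [q|l]; rewrite inE /complement_graph /=;
     [rewrite andbN orbF => /eqP ->; left | right; exists l].
move=> x y /off_p [->|[l -> pl]] /off_p [->|[m -> pm]];
  by rewrite /complement_graph /= ?eqxx ?pl ?pm ?andbT.
Qed.

Lemma edge_simplicial_G_Pi : projective_plane inc -> edge_simplicial G.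
Proof.
move=> plane x y xy.
have [l xl yl] : exists2 l, x \in closed_nbhd G (inr l) & y \in closed_nbhd G (inr l).
  case: x y xy => [p|l] [q|m] //= => [_|pm|pl].
  - by have [l /andP [pl ql]] := exists_line_through plane p q; exists l; rewrite inE /= ?pl ?ql.
  - by exists m; rewrite inE /= ?pm ?eqxx.
  - by exists l; rewrite inE /= ?pl ?eqxx.
exists (closed_nbhd G (inr l)).
by split; first exact/simplicial_closed_nbhd/clique_closed_nbhd_line.
Qed.

Lemma edge_simplicial_compl_G_Pi n :
  2 <= n -> projective_plane_of_order inc n -> edge_simplicial coG.
Proof.
move=> n_ge2 [plane line_card] x y /andP [xy not_xy].
have [p xp yp] :
    exists2 p, x \in closed_nbhd coG (inl p) & y \in closed_nbhd coG (inl p).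
  move: xy not_xy; case: x y => [q|l] [q'|m] //= => [qq'|_ qm|_ q'l|lm _].
  - by move/negPn/(negP qq').
  - by exists q; rewrite !inE /complement_graph /= ?eqxx ?qm.
  - by exists q'; rewrite !inE /complement_graph /= ?eqxx ?q'l.
  - have [p /andP [pl pm]] := exists_point_off2 plane n_ge2 line_card lm.
    by exists p; rewrite !inE /complement_graph /= ?pl ?pm.
exists (closed_nbhd coG (inl p)).
by split; first exact/simplicial_closed_nbhd/clique_closed_nbhd_point_compl.
Qed.

Lemma maximal_clique_point_set : projective_plane inc -> maximal_clique G point_set.
Proof.
move=> plane; split=> [[p|l] [q|m]|D D_clique point_setD]; rewrite ?inE //=.
apply/eqP; rewrite eqEsubset andbC point_setD /=.
apply/subsetP => -[p|l] lD; rewrite inE //.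
have [p pl] := exists_point_off plane l.
have pD : inl p \in D by apply: (subsetP point_setD); rewrite inE.
by move: (D_clique _ _ pD lD isT); rewrite /= (negbTE pl).
Qed.

Lemma maximal_stable_line_set : projective_plane inc -> maximal_stable G line_set.
Proof.
move=> plane; split=> [[p|l] [q|m]|D D_stable line_setD]; rewrite ?inE //=.
apply/eqP; rewrite eqEsubset andbC line_setD /=.
apply/subsetP => -[p|l] pD; rewrite inE //.
have [l /andP [pl _]] := exists_line_through plane p p.
have lD : inr l \in D by apply: (subsetP line_setD); rewrite inE.
by move: (D_stable _ _ pD lD isT); rewrite /= pl.
Qed.

Lemma not_CIS_G_Pi : projective_plane inc -> ~ CIS G.
Proof.
move=> plane cis.
have [x] := cis _ _ (maximal_clique_point_set plane) (maximal_stable_line_set plane).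
by case: x => ?; rewrite !inE.
Qed.

End IncidenceGraph.

Theorem proposition31 (P L : finType) (inc : P -> L -> bool) (n : nat) :
  2 <= n -> projective_plane_of_order inc n ->
  cap_edge_simplicial (G_Pi inc) /\ ~ CIS (G_Pi inc).
Proof.
move=> n_ge2 plane_n; have [plane _] := plane_n.
split; last exact: not_CIS_G_Pi.
split; first exact: edge_simplicial_G_Pi.
exact: edge_simplicial_compl_G_Pi n_ge2 plane_n.
Qed.
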